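(* Let $\Omega\subset\mathbb{R}^2$ be open, connected and simply connected, with light-cone coordinates $(\xi_L,\xi_R)$, and let $f:\Omega\to\mathbb{C}^N\setminus\{0\}$ be a smooth solution of the Euler--Lagrange equations of the $\mathbb{C}P^{N-1}$ sigma model on Minkowski space, $$P\Big\{\partial_L\partial_R f-\frac{1}{f^\dagger f}\big((f^\dagger\partial_R f)\,\partial_L f+(f^\dagger\partial_L f)\,\partial_R f\big)\Big\}=0,\qquad P={\bf 1}-\frac{f\otimes f^\dagger}{f^\dagger f}.$$ Let $X:\Omega\to su(N)$ be the associated surface, i.e. $\partial_L X=[\partial_L P,P]$, $\partial_R X=-[\partial_R P,P]$. Then the induced metric $G_{BD}=(\partial_B X,\partial_D X)$, $B,D\in\{L,R\}$, is $$G_{LL}=J_L=\frac{\partial_L f^\dagger P\partial_L f}{f^\dagger f},\quad G_{RR}=J_R=\frac{\partial_R f^\dagger P\partial_R f}{f^\dagger f},\quad G_{LR}=-\Re\Big(\frac{\partial_R f^\dagger P\partial_L f}{f^\dagger f}\Big),$$ and the first fundamental form $I=J_L\,d\xi_L^2+2G_{LR}\,d\xi_L d\xi_R+J_R\,d\xi_R^2$ is positive semidefinite at every point of $\Omega$ ($J_L\ge 0$, $J_R\ge0$, $\det G\ge 0$). Moreover, $I$ is positive definite at a point $(\xi_L^0,\xi_R^0)\in\Omega$ if either $\Im\big(\partial_L f^\dagger P\partial_R f\big)(\xi_L^0,\xi_R^0)\neq 0$, or the vectors $\partial_L f(\xi_L^0,\xi_R^0)$, $\partial_R f(\xi_L^0,\xi_R^0)$,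 $f(\xi_L^0,\xi_R^0)$ are linearly independent over $\mathbb{C}$.
   Context: Minkowski metric $ds^2=(d\xi^1)^2-(d\xi^2)^2=d\xi_L\,d\xi_R$ with $\xi_L=\xi^1+\xi^2$, $\xi_R=\xi^1-\xi^2$, $\partial_L=\frac12(\partial_{\xi^1}+\partial_{\xi^2})$, $\partial_R=\frac12(\partial_{\xi^1}-\partial_{\xi^2})$. Vectors in $\mathbb{C}^N$ are columns, $f^\dagger$ is the conjugate transpose, and $f\otimes f^\dagger$ denotes the $N\times N$ matrix $ff^\dagger$. The algebra $su(N)$ is identified with the Euclidean space $\mathbb{R}^{N^2-1}$ via the scalar product $(A,B)=-\frac12\,\mathrm{tr}(AB)$. For a solution $f$ one has $\partial_L[\partial_R P,P]+\partial_R[\partial_L P,P]=0$, so an $su(N)$-valued function $X$ with $\partial_L X=[\partial_L P,P]$, $\partial_R X=-[\partial_R P,P]$ exists on $\Omega$ (unique up to an additive constant); its image is the surface associated with $f$. *)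

From HB Require Import structures.
From mathcomp Require Import all_boot all_order all_algebra.
From mathcomp Require Import complex.
From mathcomp Require Import all_classical all_reals all_analysis.
Set Implicit Arguments. Unset Strict Implicit. Unset Printing Implicit Defensive.
Import Order.TTheory GRing.Theory Num.Theory.
Import numFieldNormedType.Exports.
Local Open Scope classical_set_scope.
Local Open Scope ring_scope.
Local Open Scope complex_scope.

Section Defs.
Variable R : realType.
Local Notation C := R[i].
Local Notation pt := (R * R)%type.

Definition simply_connected (O : set pt) : Prop :=
  forall g : R -> pt,
    {within `[0, 1]%classic, continuous g} ->
    g @` `[0, 1]%classic `<=` O -> g 0 = g 1 ->
    exists H : pt -> pt,
      {within (`[0, 1]%classic `*` `[0, 1]%classic), continuous H} /\
      H @` (`[0, 1]%classic `*` `[0, 1]%classic) `<=` O /\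
      (forall s, s \in `[0, 1] -> H (s, 0) = g s /\ H (s, 1) = g 0) /\
      (forall t, t \in `[0, 1] -> H (0, t) = g 0 /\ H (1, t) = g 0).

Fixpoint iterD (vs : seq pt) (h : pt -> R) : pt -> R :=
  match vs with
  | [::] => h
  | v :: vs' => fun x => 'D_v (iterD vs' h) x
  end.

Definition smooth_on (O : set pt) (h : pt -> R) : Prop :=
  forall vs : seq pt,
    {within O, continuous (iterD vs h)} /\
    (forall v x, O x -> derivable (iterD vs h) x v).

Definition smooth_cvec_on (N : nat) (O : set pt) (f : pt -> 'cV[C]_N) : Prop :=
  forall i : 'I_N, smooth_on O (fun x => complex.Re (f x i 0)) /\
                   smooth_on O (fun x => complex.Im (f x i 0)).

(* xi^1 = (xi_L + xi_R)/2, xi^2 = (xi_L - xi_R)/2, hence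
   d_L = (d_1 + d_2)/2 is the derivative in direction (1/2, 1/2) and
   d_R = (d_1 - d_2)/2 the derivative in direction (1/2, -1/2). *)
Definition eL : pt := (2^-1, 2^-1).
Definition eR : pt := (2^-1, - 2^-1).

Definition dmx (m n : nat) (v : pt) (A : pt -> 'M[C]_(m, n)) : pt -> 'M[C]_(m, n) :=
  fun x => \matrix_(i, j) ('D_v (fun y => complex.Re (A y i j)) x
                           +i* 'D_v (fun y => complex.Im (A y i j)) x).

Definition mx_is_derive (m n : nat) (x v : pt) (A : pt -> 'M[C]_(m, n))
    (D : 'M[C]_(m, n)) : Prop :=
  forall i j, is_derive x v (fun y => complex.Re (A y i j)) (complex.Re (D i j)) /\
              is_derive x v (fun y => complex.Im (A y i j)) (complex.Im (D i j)).

Definition dL (m n : nat) := @dmx m n eL.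
Definition dR (m n : nat) := @dmx m n eR.

Definition adj (m n : nat) (A : 'M[C]_(m, n)) : 'M[C]_(n, m) :=
  (map_mx (@conjc R) A)^T.

Definition hprod (N : nat) (u v : 'cV[C]_N) : C := (adj u *m v) 0 0.

Definition projP (N : nat) (f : 'cV[C]_N) : 'M[C]_N :=
  1%:M - (hprod f f)^-1 *: (f *m adj f).

Definition comm (N : nat) (A B : 'M[C]_N) : 'M[C]_N := A *m B - B *m A.

Definition in_su (N : nat) (A : 'M[C]_N) : Prop := adj A = - A /\ \tr A = 0.

Definition su_dot (N : nat) (A B : 'M[C]_N) : C := - 2^-1 * \tr (A *m B).

Definition CPN_EL (N : nat) (O : set pt) (f : pt -> 'cV[C]_N) : Prop :=
  forall x, O x ->
    projP (f x) *m
      (dL (dR f) x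
       - (hprod (f x) (f x))^-1 *:
           (hprod (f x) (dR f x) *: dL f x + hprod (f x) (dL f x) *: dR f x))
    = 0.

Definition psd_form (a b c : C) : Prop :=
  forall u v : R, 0 <= a * u%:C ^+ 2 + 2%:R * b * u%:C * v%:C + c * v%:C ^+ 2.
Definition pd_form (a b c : C) : Prop :=
  forall u v : R, (u, v) != (0, 0) ->
    0 < a * u%:C ^+ 2 + 2%:R * b * u%:C * v%:C + c * v%:C ^+ 2.

End Defs.
Arguments eL {R}.
Arguments eR {R}.

(* Write n = f^† f and a = P ∂_L f, b = P ∂_R f for the parts of the derivatives
   of f orthogonal to f.  Differentiating P = 1 - f f^† / n gives
   ∂_B P = -((P ∂_B f) f^† + f (P ∂_B f)^†) / n, hence ∂_L X = (a f^† - f a^†) / n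
   and ∂_R X = (f b^† - b f^†) / n.  As a and b are orthogonal to f, the trace
   formula for (A, B) = -tr(AB)/2 gives G_LL = a^† a / n, G_RR = b^† b / n and
   G_LR = -Re(b^† a) / n, so the first fundamental form at (u, v) equals
   |u a - v b|^2 / n.  It is therefore positive semidefinite, and definite unless
   u a = v b for some real (u, v) ≠ (0, 0).  Such a relation makes a^† b real,
   and it also says that u ∂_L f - v ∂_R f lies in C f, which contradicts the
   independence of ∂_L f, ∂_R f, f. *)

From HB Require Import structures.
From mathcomp Require Import all_boot all_order all_algebra.
From mathcomp Require Import complex.
From mathcomp Require Import all_classical all_reals all_analysis.
From mathcomp Require Import ring lra.
Set Implicit Arguments. Unset Strict Implicit. Unset Printing Implicit Defensive.
Import Order.TTheory GRing.Theory Num.Theory.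
Import numFieldNormedType.Exports.
Local Open Scope classical_set_scope.
Local Open Scope ring_scope.
Local Open Scope complex_scope.

Lemma is_derive_inv (K : numFieldType) (V : normedModType K) (r : V -> K)
    (x v : V) (dr : K) :
  r x != 0 -> is_derive x v r dr ->
  is_derive x v (fun y => (r y)^-1) (- r x ^- 2 *: dr).
Proof.
move=> rx0 [r_der <-]; apply: DeriveDef; first exact: derivableV.
by rewrite deriveV.
Qed.

Section ComplexDerive.
Variable R : realType.
Local Notation C := R[i].
Local Notation pt := (R * R)%type.
Local Notation Re := complex.Re.
Local Notation Im := complex.Im.
Variables (x v : pt).

Definition is_cderive (g : pt -> C) (d : C) :=
  is_derive x v (fun y => Re (g y)) (Re d) /\
  is_derive x v (fun y => Im (g y)) (Im d).

Lemma is_cderive_eq (g h : pt -> C) (dg dh : C) :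
  (forall y, g y = h y) -> dg = dh -> is_cderive g dg -> is_cderive h dh.
Proof. by move=> /funext -> ->. Qed.

Lemma is_cderive_cst (c : C) : is_cderive (fun _ => c) 0.
Proof. by split; apply: is_derive_cst. Qed.

Lemma is_cderive_real (r : pt -> R) (dr : R) :
  is_derive x v r dr -> is_cderive (fun y => (r y)%:C) dr%:C.
Proof. by split => //; apply: is_derive_cst. Qed.

Lemma is_cderiveD (g h : pt -> C) (dg dh : C) :
  is_cderive g dg -> is_cderive h dh -> is_cderive (fun y => g y + h y) (dg + dh).
Proof.
by move=> [gRe gIm] [hRe hIm]; split; rewrite raddfD;
  under eq_fun do rewrite raddfD; exact: is_deriveD.
Qed.

Lemma is_cderiveN (g : pt -> C) (dg : C) :
  is_cderive g dg -> is_cderive (fun y => - g y) (- dg).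
Proof.
by move=> [gRe gIm]; split; rewrite raddfN;
  under eq_fun do rewrite raddfN; exact: is_deriveN.
Qed.

Lemma is_cderiveM (g h : pt -> C) (dg dh : C) :
  is_cderive g dg -> is_cderive h dh ->
  is_cderive (fun y => g y * h y) (g x * dh + dg * h x).
Proof.
have ReM (a b : C) : Re (a * b) = Re a * Re b - Im a * Im b by case: a b => ? ? [].
have ImM (a b : C) : Im (a * b) = Re a * Im b + Im a * Re b by case: a b => ? ? [].
move=> [gRe gIm] [hRe hIm]; split.
- under eq_fun do rewrite ReM.
  apply: is_derive_eq (is_deriveB (is_deriveM gRe hRe) (is_deriveM gIm hIm)) _.
  case: (g x) (h x) (dg) (dh) => ? ? [? ?] [? ?] [? ?] /=.
  by rewrite -![_ *: _]/(_ * _); ring.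
- under eq_fun do rewrite ImM.
  apply: is_derive_eq (is_deriveD (is_deriveM gRe hIm) (is_deriveM gIm hRe)) _.
  case: (g x) (h x) (dg) (dh) => ? ? [? ?] [? ?] [? ?] /=.
  by rewrite -![_ *: _]/(_ * _); ring.
Qed.

Lemma is_cderiveJ (g : pt -> C) (dg : C) :
  is_cderive g dg -> is_cderive (fun y => (g y)^*%C) dg^*%C.
Proof.
have ReJ (a : C) : Re a^*%C = Re a by case: a.
have ImJ (a : C) : Im a^*%C = - Im a by case: a.
move=> [gRe gIm]; split; under eq_fun do rewrite ?ReJ ?ImJ; rewrite ?ReJ ?ImJ //.
exact: is_deriveN.
Qed.

Lemma is_cderiveV (g : pt -> C) (dg : C) :
  g x != 0 -> is_cderive g dg -> is_cderive (fun y => (g y)^-1) (- dg / g x ^+ 2).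
Proof.
(* g^-1 = g^* / r, where r = |g|^2 is real valued, so is_derive_inv applies to it. *)
move=> gx0 hg; set r := fun y => Re (g y) ^+ 2 + Im (g y) ^+ 2.
have rE y : (r y)%:C = g y * (g y)^*%C by rewrite add_Re2_Im2 normCK.
set dr := g x * dg^*%C + dg * (g x)^*%C.
have drE : (Re dr)%:C = dr by rewrite ReJ_add /dr !(rmorphD, rmorphM) /= !conjcK; field.
have [r_der _] : is_cderive (fun y => (r y)%:C) dr.
  by apply: is_cderive_eq (is_cderiveM hg (is_cderiveJ hg)).
have rx0 : r x != 0.
  have : (r x)%:C != 0 by rewrite rE mulf_neq0 ?conjc_eq0.
  by apply: contra_neq => ->.
have rV_der := is_cderive_real (is_derive_inv rx0 r_der).
apply: is_cderive_eq (is_cderiveM (is_cderiveJ hg) rV_der).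
  by move=> y; rewrite invC_norm -add_Re2_Im2 fmorphV mulrC.
have -> : (- r x ^- 2 *: Re dr)%:C = - (r x)%:C ^- 2 * (Re dr)%:C.
  by rewrite -[_ *: _]/(_ * _) rmorphM rmorphN fmorphV rmorphXn.
have -> : ((r x)^-1)%:C = (r x)%:C^-1 by rewrite fmorphV.
rewrite drE /dr rE; field.
by rewrite gx0 conjc_eq0 gx0.
Qed.

Lemma is_cderive_sum (I : Type) (s : seq I) (g : I -> pt -> C) (d : I -> C) :
  (forall k, is_cderive (g k) (d k)) ->
  is_cderive (fun y => \sum_(k <- s) g k y) (\sum_(k <- s) d k).
Proof.
move=> hg; elim: s => [|k s IH].
  by apply: is_cderive_eq (is_cderive_cst 0) => [y|]; rewrite big_nil.
by apply: is_cderive_eq (is_cderiveD (hg k) IH) => [y|]; rewrite big_cons.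
Qed.

End ComplexDerive.

Section MatrixDerive.
Variable R : realType.
Local Notation C := R[i].
Local Notation pt := (R * R)%type.
Variables (x v : pt).
Local Notation is_cderive := (is_cderive x v).
Local Notation mx_is_derive := (mx_is_derive x v).

Lemma mx_is_derive_dmx m n (A : pt -> 'M[C]_(m, n)) (D : 'M[C]_(m, n)) :
  mx_is_derive A D -> dmx v A x = D.
Proof.
move=> hA; apply/matrixP => i j; rewrite mxE.
by have [[_ ->] [_ ->]] := hA i j; case: (D i j).
Qed.

Lemma mx_is_derive_cst m n (M : 'M[C]_(m, n)) : mx_is_derive (fun _ => M) 0.
Proof. by move=> i j; rewrite mxE; exact: is_cderive_cst. Qed.

Lemma mx_is_deriveD m n (A B : pt -> 'M[C]_(m, n)) dA dB :
  mx_is_derive A dA -> mx_is_derive B dB ->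
  mx_is_derive (fun y => A y + B y) (dA + dB).
Proof.
move=> hA hB i j; apply: is_cderive_eq (is_cderiveD (hA i j) (hB i j)) => [y|];
  by rewrite mxE.
Qed.

Lemma mx_is_deriveN m n (A : pt -> 'M[C]_(m, n)) dA :
  mx_is_derive A dA -> mx_is_derive (fun y => - A y) (- dA).
Proof.
move=> hA i j; apply: is_cderive_eq (is_cderiveN (hA i j)) => [y|];
  by rewrite mxE.
Qed.

Lemma mx_is_deriveB m n (A B : pt -> 'M[C]_(m, n)) dA dB :
  mx_is_derive A dA -> mx_is_derive B dB ->
  mx_is_derive (fun y => A y - B y) (dA - dB).
Proof. by move=> hA hB; apply: mx_is_deriveD => //; apply: mx_is_deriveN. Qed.

Lemma mx_is_deriveM m n p (A : pt -> 'M[C]_(m, n)) (B : pt -> 'M[C]_(n, p)) dA dB :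
  mx_is_derive A dA -> mx_is_derive B dB ->
  mx_is_derive (fun y => A y *m B y) (A x *m dB + dA *m B x).
Proof.
move=> hA hB i j.
have := is_cderive_sum (index_enum 'I_n) (fun k => is_cderiveM (hA i k) (hB k j)).
by apply: is_cderive_eq => [y|]; rewrite !mxE // -big_split.
Qed.

Lemma mx_is_deriveZ m n (c : pt -> C) dc (A : pt -> 'M[C]_(m, n)) dA :
  is_cderive c dc -> mx_is_derive A dA ->
  mx_is_derive (fun y => c y *: A y) (c x *: dA + dc *: A x).
Proof.
move=> hc hA i j; apply: is_cderive_eq (is_cderiveM hc (hA i j)) => [y|];
  by rewrite !mxE.
Qed.

Lemma mx_is_derive_adj m n (A : pt -> 'M[C]_(m, n)) dA :
  mx_is_derive A dA -> mx_is_derive (fun y => adj (A y)) (adj dA).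
Proof.
move=> hA i j; apply: is_cderive_eq (is_cderiveJ (hA j i)) => [y|];
  by rewrite !mxE.
Qed.

End MatrixDerive.

Lemma smooth_cvec_is_derive (R : realType) (N : nat) (O : set (R * R))
    (f : R * R -> 'cV[R[i]]_N) (x v : R * R) :
  smooth_cvec_on O f -> O x -> mx_is_derive x v f (dmx v f x).
Proof.
move=> f_smooth Ox i j; rewrite (ord1 j) !mxE.
have [[_ dRe] [_ dIm]] := ((f_smooth i).1 [::], (f_smooth i).2 [::]).
by split; apply: derivableP; [exact: dRe | exact: dIm].
Qed.

Section Hermitian.
Variable R : realType.
Local Notation C := R[i].
Variable N : nat.
Local Notation V := 'cV[C]_N.

Lemma adjK m n (A : 'M[C]_(m, n)) : adj (adj A) = A.
Proof. by apply/matrixP => i j; rewrite !mxE conjcK. Qed.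

Lemma adjD m n (A B : 'M[C]_(m, n)) : adj (A + B) = adj A + adj B.
Proof. by apply/matrixP => i j; rewrite !mxE rmorphD. Qed.

Lemma adjN m n (A : 'M[C]_(m, n)) : adj (- A) = - adj A.
Proof. by apply/matrixP => i j; rewrite !mxE rmorphN. Qed.

Lemma adjB m n (A B : 'M[C]_(m, n)) : adj (A - B) = adj A - adj B.
Proof. by rewrite adjD adjN. Qed.

Lemma adjZ m n (s : C) (A : 'M[C]_(m, n)) : adj (s *: A) = s^*%C *: adj A.
Proof. by apply/matrixP => i j; rewrite !mxE rmorphM. Qed.

Lemma adjM m n p (A : 'M[C]_(m, n)) (B : 'M[C]_(n, p)) :
  adj (A *m B) = adj B *m adj A.
Proof. by rewrite /adj map_mxM trmx_mul. Qed.

Lemma adj1 n : adj (1%:M : 'M[C]_n) = 1%:M.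
Proof. by rewrite /adj map_mx1 trmx1. Qed.

Lemma hprodE (u w : V) : adj u *m w = (hprod u w)%:M.
Proof. exact: mx11_scalar. Qed.

Lemma hprodC (u w : V) : hprod u w = (hprod w u)^*%C.
Proof. by rewrite /hprod -[adj u *m w]adjK adjM adjK !mxE. Qed.

Lemma conj_hprod_self (u : V) : (hprod u u)^*%C = hprod u u.
Proof. by rewrite -hprodC. Qed.

Lemma hprodBr (u w z : V) : hprod u (w - z) = hprod u w - hprod u z.
Proof. by rewrite /hprod mulmxBr !mxE. Qed.

Lemma hprodZr (s : C) (u w : V) : hprod u (s *: w) = s * hprod u w.
Proof. by rewrite /hprod -scalemxAr mxE. Qed.

Lemma hprodBl (u w z : V) : hprod (w - z) u = hprod w u - hprod z u.
Proof. by rewrite /hprod adjB mulmxBl !mxE. Qed.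

Lemma hprodZl (s : C) (u w : V) : hprod (s *: w) u = s^*%C * hprod w u.
Proof. by rewrite /hprod adjZ -scalemxAl mxE. Qed.

Lemma hprod_sum (u w : V) : hprod u w = \sum_k (u k 0)^*%C * w k 0.
Proof. by rewrite /hprod mxE; apply: eq_bigr => k _; rewrite !mxE. Qed.

Lemma hprod_ge0 (u : V) : 0 <= hprod u u.
Proof. by rewrite hprod_sum sumr_ge0 // => k _; rewrite mulrC mulcJ_ge0. Qed.

Lemma hprod_gt0 (u : V) : u != 0 -> 0 < hprod u u.
Proof.
apply: contraNT; rewrite lt_def hprod_ge0 andbT negbK hprod_sum psumr_eq0; last first.
  by move=> k _; rewrite mulrC mulcJ_ge0.
move=> /allP u0; apply/eqP/matrixP => i j; rewrite (ord1 j) mxE.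
by have := u0 i (mem_index_enum _); rewrite /= mulf_eq0 conjc_eq0 orbb => /eqP.
Qed.

Lemma tr_outer (u w : V) : \tr (u *m adj w) = hprod w u.
Proof. by rewrite mxtrace_mulC hprodE mxtrace_scalar. Qed.

Lemma outer_mul (u w y z : V) :
  (u *m adj w) *m (y *m adj z) = hprod w y *: (u *m adj z).
Proof. by rewrite mulmxA -(mulmxA u) hprodE mul_mx_scalar -scalemxAl. Qed.

(* Locked: unfolding it when unification compares two distinct instances is very slow. *)
Fact skew_outer_key : unit. Proof. by []. Qed.
Definition skew_outer : V -> V -> 'M[C]_N :=
  locked_with skew_outer_key (fun a b => a *m adj b - b *m adj a).

Lemma skew_outerE (a b : V) : skew_outer a b = a *m adj b - b *m adj a.
Proof. by rewrite /skew_outer locked_withE. Qed.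

Lemma skew_outerC (a b : V) : skew_outer a b = - skew_outer b a.
Proof. by rewrite !skew_outerE opprB. Qed.

Lemma su_dotC (A B : 'M[C]_N) : su_dot A B = su_dot B A.
Proof. by rewrite /su_dot mxtrace_mulC. Qed.

Lemma su_dotZ (s t : C) (A B : 'M[C]_N) : su_dot (s *: A) (t *: B) = s * t * su_dot A B.
Proof. by rewrite /su_dot -scalemxAl -scalemxAr !mxtraceZ; ring. Qed.

Lemma su_dot_skew_outer (f a b : V) : hprod f a = 0 -> hprod f b = 0 ->
  su_dot (skew_outer a f) (skew_outer b f) = hprod f f * (hprod a b + hprod b a) / 2.
Proof.
move=> fa fb; have af : hprod a f = 0 by rewrite hprodC fa conjc0.
have bf : hprod b f = 0 by rewrite hprodC fb conjc0.
rewrite /su_dot !skew_outerE mulmxBl !mulmxBr !outer_mul !raddfB /= !mxtraceZ.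
by rewrite !tr_outer fa fb af bf; field.
Qed.

End Hermitian.

Section Projector.
Variable R : realType.
Local Notation C := R[i].
Variable N : nat.
Local Notation V := 'cV[C]_N.
Variable f : V.
Hypothesis f_neq0 : f != 0.
Local Notation n := (hprod f f).
Local Notation P := (projP f).

Let n_neq0 : n != 0. Proof. by rewrite gt_eqF ?hprod_gt0. Qed.

Lemma projP_adj : adj P = P.
Proof. by rewrite /projP adjB adj1 adjZ adjM adjK fmorphV /= conj_hprod_self. Qed.

Lemma projP_mulv (u : V) : P *m u = u - (n^-1 * hprod f u) *: f.
Proof.
by rewrite /projP mulmxBl mul1mx -scalemxAl -mulmxA hprodE mul_mx_scalar scalerA.
Qed.

Lemma projP_f : P *m f = 0.
Proof. by rewrite projP_mulv mulVf // scale1r subrr. Qed.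

Lemma hprod_f_projP (u : V) : hprod f (P *m u) = 0.
Proof. by rewrite projP_mulv hprodBr hprodZr mulrAC mulVf // mul1r subrr. Qed.

Lemma adj_projP (u : V) : adj (P *m u) = adj u *m P.
Proof. by rewrite adjM projP_adj. Qed.

Lemma adj_f_projP : adj f *m P = 0.
Proof. by rewrite -adj_projP projP_f; apply/matrixP => i j; rewrite !mxE conjc0. Qed.

Lemma projP_idem : P *m P = P.
Proof.
by rewrite {2}/projP mulmxBr mulmx1 -scalemxAr mulmxA projP_f mul0mx scaler0 subr0.
Qed.

Lemma projP_idemv (u : V) : P *m (P *m u) = P *m u.
Proof. by rewrite mulmxA projP_idem. Qed.

Lemma hprod_projP_projP (u w : V) : hprod (P *m u) (P *m w) = hprod u (P *m w).
Proof. by rewrite /hprod adj_projP -mulmxA projP_idemv. Qed.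

(* The product and quotient rules applied to P = 1 - n^-1 f f^†, rewritten with P df. *)
Lemma dprojPE (df : V) :
  0 - (n^-1 *: (f *m adj df + df *m adj f)
       + (- (adj f *m df + adj df *m f) 0 0 / n ^+ 2) *: (f *m adj f))
  = - n^-1 *: ((P *m df) *m adj f + f *m adj (P *m df)).
Proof.
rewrite projP_mulv mxE !hprodE !mxE !mulr1n; apply/matrixP => i j.
rewrite !mxE !big_ord1 !mxE rmorphB !rmorphM fmorphV /= conj_hprod_self -hprodC.
by field.
Qed.

Lemma comm_dprojP (a : V) : P *m a = a ->
  comm (- n^-1 *: (a *m adj f + f *m adj a)) P = n^-1 *: skew_outer a f.
Proof.
move=> Pa; have aP : adj a *m P = adj a by rewrite -adj_projP Pa.
have MP : (a *m adj f + f *m adj a) *m P = f *m adj a.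
  by rewrite mulmxDl -!mulmxA adj_f_projP aP mulmx0 add0r.
have PM : P *m (a *m adj f + f *m adj a) = a *m adj f.
  by rewrite mulmxDr !mulmxA Pa projP_f mul0mx addr0.
by rewrite /comm -scalemxAl -scalemxAr MP PM !scaleNr opprK addrC -scalerBr skew_outerE.
Qed.

End Projector.

Lemma dmx_projP (R : realType) (N : nat) (f : R * R -> 'cV[R[i]]_N) (x v : R * R)
    (df : 'cV[R[i]]_N) :
  mx_is_derive x v f df -> f x != 0 ->
  dmx v (fun y => projP (f y)) x
  = - (hprod (f x) (f x))^-1 *:
      ((projP (f x) *m df) *m adj (f x) + f x *m adj (projP (f x) *m df)).
Proof.
move=> hf fx0; rewrite -(dprojPE fx0); apply: mx_is_derive_dmx.
have n_neq0 : hprod (f x) (f x) != 0 by rewrite gt_eqF ?hprod_gt0.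
have hn := mx_is_deriveM (mx_is_derive_adj hf) hf 0 0.
exact: mx_is_deriveB (mx_is_derive_cst _ _ 1%:M)
  (mx_is_deriveZ (is_cderiveV n_neq0 hn) (mx_is_deriveM hf (mx_is_derive_adj hf))).
Qed.

Lemma quadratic_psd_det (R : realFieldType) (a b c : R) :
  (forall u v : R, 0 <= a * u ^+ 2 + 2 * b * u * v + c * v ^+ 2) ->
  0 <= a * c - b ^+ 2.
Proof.
(* At (-b, a) and (c, -b) the form equals a (ac - b^2) and c (ac - b^2); if a = c = 0,
   the point (1, -b) forces b = 0. *)
move=> H; have := H 1 0; have := H 0 1; have := H (- b) a; have := H c (- b).
have := H 1 (- b); have [a_gt0|] := ltrP 0 a.
  by move=> *; rewrite -(pmulr_rge0 _ a_gt0); nra.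
have [c_gt0|] := ltrP 0 c; last by move=> *; nra.
by move=> *; rewrite -(pmulr_rge0 _ c_gt0); nra.
Qed.

Section QuadraticForm.
Variable R : realType.
Local Notation C := R[i].

Lemma psd_form_real (a b c : R) :
  psd_form a%:C b%:C c%:C <->
  forall u v : R, 0 <= a * u ^+ 2 + 2 * b * u * v + c * v ^+ 2.
Proof.
have formE u v : a%:C * u%:C ^+ 2 + 2%:R * b%:C * u%:C * v%:C + c%:C * v%:C ^+ 2
    = (a * u ^+ 2 + 2 * b * u * v + c * v ^+ 2)%:C.
  by rewrite !(rmorphD, rmorphM, rmorphXn, rmorph_nat).
by split=> H u v; have := H u v; rewrite ?formE ler0c.
Qed.

Lemma psd_form_det (a b c : C) :
  b \is Num.real -> psd_form a b c -> 0 <= a * c - b * b.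
Proof.
move=> /complex_realP [{}b ->] psd.
have a_ge0 : 0 <= a.
  have := psd 1 0; rewrite rmorph1 rmorph0 expr1n expr0n /=.
  by rewrite !(mulr0, mul0r, addr0, mulr1).
have c_ge0 : 0 <= c.
  have := psd 0 1; rewrite rmorph1 rmorph0 expr1n expr0n /=.
  by rewrite !(mulr0, mul0r, add0r, mulr1).
move: psd; rewrite -(RRe_real (ger0_real a_ge0)) -(RRe_real (ger0_real c_ge0)).
move=> /psd_form_real /quadratic_psd_det.
by rewrite expr2 -ler0c !(rmorphB, rmorphM).
Qed.

End QuadraticForm.

Section Independence.
Variable R : realType.
Local Notation C := R[i].
Variable N : nat.
Local Notation V := 'cV[C]_N.

Lemma Im_hprod_eq0 (a b : V) (u v : R) :
  (u, v) != (0, 0) -> u%:C *: a = v%:C *: b -> complex.Im (hprod a b) = 0.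
Proof.
move=> uv0 uab.
have ImM r z : complex.Im (r%:C * z) = r * complex.Im z.
  by case: z => ? ? /=; rewrite mul0r addr0.
have Im_hnorm (w : V) : complex.Im (hprod w w) = 0 by rewrite ger0_Im ?hprod_ge0.
have uIm : u * complex.Im (hprod a b) = 0.
  by rewrite -ImM -(conjc_real u) -hprodZl uab hprodZl conjc_real ImM Im_hnorm mulr0.
have vIm : v * complex.Im (hprod a b) = 0.
  by rewrite -ImM -hprodZr -uab hprodZr ImM Im_hnorm mulr0.
have [u0|u_neq0] := eqVneq u 0.
  have [v0|v_neq0] := eqVneq v 0; first by rewrite u0 v0 eqxx in uv0.
  by move/eqP: vIm; rewrite mulf_eq0 (negPf v_neq0) => /eqP.
by move/eqP: uIm; rewrite mulf_eq0 (negPf u_neq0) => /eqP.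
Qed.

Lemma free_projP_comb (p q f : V) (u v : C) :
  free [:: p; q; f] -> projP f *m (u *: p - v *: q) = 0 -> u = 0 /\ v = 0.
Proof.
move=> /freeP pqf_free; rewrite projP_mulv; set c := _ * _ => comb0.
have /pqf_free coef0 : \sum_(i < 3) [:: u; - v; - c]`_i *: [:: p; q; f]`_i = 0.
  by rewrite !big_ord_recl big_ord0 /= addr0 !scaleNr addrA -comb0.
by split; [exact: (coef0 0) | apply/eqP; rewrite -oppr_eq0; exact/eqP/(coef0 1)].
Qed.

End Independence.

Section Metric.
Variable R : realType.
Local Notation C := R[i].
Variable N : nat.
Local Notation V := 'cV[C]_N.
Variables f a b : V.
Hypotheses (f_neq0 : f != 0) (Pa : projP f *m a = a) (Pb : projP f *m b = b).
Local Notation n := (hprod f f).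
Local Notation XL := (n^-1 *: skew_outer a f).
Local Notation XR := (n^-1 *: skew_outer f b).

Let n_gt0 : 0 < n. Proof. exact: hprod_gt0. Qed.
Let n_neq0 : n != 0. Proof. by rewrite gt_eqF. Qed.
Let fa : hprod f a = 0. Proof. by rewrite -Pa hprod_f_projP. Qed.
Let fb : hprod f b = 0. Proof. by rewrite -Pb hprod_f_projP. Qed.
Let XRE : XR = - n^-1 *: skew_outer b f.
Proof. by rewrite scaleNr -scalerN -skew_outerC. Qed.

Lemma su_dot_LL : su_dot XL XL = hprod a a / n.
Proof. by rewrite su_dotZ (su_dot_skew_outer fa fa); field. Qed.

Lemma su_dot_RR : su_dot XR XR = hprod b b / n.
Proof. by rewrite XRE su_dotZ (su_dot_skew_outer fb fb); field. Qed.

Lemma su_dot_LR : su_dot XL XR = - (complex.Re (hprod b a / n))%:C.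
Proof.
rewrite XRE su_dotZ (su_dot_skew_outer fa fb) ReJ_add !rmorphM fmorphV /= conj_hprod_self.
by rewrite -hprodC; field.
Qed.

Lemma metric_form (u v : R) :
  su_dot XL XL * u%:C ^+ 2 + 2%:R * su_dot XL XR * u%:C * v%:C
    + su_dot XR XR * v%:C ^+ 2
  = hprod (u%:C *: a - v%:C *: b) (u%:C *: a - v%:C *: b) / n.
Proof.
rewrite su_dot_LL su_dot_LR su_dot_RR ReJ_add !rmorphM fmorphV /= conj_hprod_self.
by rewrite -hprodC hprodBl !hprodBr !hprodZl !hprodZr !conjc_real; field.
Qed.

Lemma metric_psd : psd_form (su_dot XL XL) (su_dot XL XR) (su_dot XR XR).
Proof. by move=> u v; rewrite metric_form divr_ge0 ?hprod_ge0 ?(ltW n_gt0). Qed.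

Lemma metric_pd :
  (forall u v : R, (u, v) != (0, 0) -> u%:C *: a - v%:C *: b != 0) ->
  pd_form (su_dot XL XL) (su_dot XL XR) (su_dot XR XR).
Proof. by move=> indep u v uv0; rewrite metric_form divr_gt0 ?n_gt0 ?hprod_gt0 ?indep. Qed.

End Metric.

Lemma first_fundamental_form (R : realType) (N : nat) (F p q : 'cV[R[i]]_N) :
  F != 0 ->
  let XL := (hprod F F)^-1 *: skew_outer (projP F *m p) F in
  let XR := (hprod F F)^-1 *: skew_outer F (projP F *m q) in
  let G_LL := su_dot XL XL in
  let G_LR := su_dot XL XR in
  let G_RL := su_dot XR XL in
  let G_RR := su_dot XR XR in
  let nf := hprod F F in
  let J_L := hprod p (projP F *m p) / nf in
  let J_R := hprod q (projP F *m q) / nf in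
  [/\ G_LL = J_L, G_RR = J_R,
      G_LR = - (complex.Re (hprod q (projP F *m p) / nf))%:C /\ G_RL = G_LR,
      psd_form G_LL G_LR G_RR /\
        [/\ 0 <= J_L, 0 <= J_R & 0 <= G_LL * G_RR - G_LR * G_RL] &
      ((complex.Im (hprod p (projP F *m q)) != 0 \/ free [:: p; q; F]) ->
         pd_form G_LL G_LR G_RR)].
Proof.
move=> F_neq0 XL XR G_LL G_LR G_RL G_RR nf J_L J_R.
have Pa := projP_idemv F_neq0 p; have Pb := projP_idemv F_neq0 q.
have G_LLE : G_LL = J_L by rewrite /G_LL /XL (su_dot_LL F_neq0 Pa) hprod_projP_projP.
have G_RRE : G_RR = J_R by rewrite /G_RR /XR (su_dot_RR F_neq0 Pb) hprod_projP_projP.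
have G_LRE : G_LR = - (complex.Re (hprod q (projP F *m p) / nf))%:C.
  by rewrite /G_LR /XL /XR (su_dot_LR F_neq0 Pa Pb) hprod_projP_projP.
have G_RLE : G_RL = G_LR by apply: su_dotC.
have psd : psd_form G_LL G_LR G_RR := metric_psd F_neq0 Pa Pb.
split; [exact: G_LLE | exact: G_RRE | exact: conj G_LRE G_RLE
       | split; [exact: psd | split] | ].
- by rewrite /J_L -[hprod p _](hprod_projP_projP F_neq0) divr_ge0 ?hprod_ge0.
- by rewrite /J_R -[hprod q _](hprod_projP_projP F_neq0) divr_ge0 ?hprod_ge0.
- rewrite G_RLE; apply: psd_form_det psd.
  by rewrite G_LRE rpredN; apply/complex_realP; eexists.
case=> [Im_neq0 | pqF_free]; apply: (metric_pd F_neq0 Pa Pb) => u v uv0.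
  apply: contra_neq Im_neq0 => /eqP; rewrite subr_eq0 => /eqP uab.
  by rewrite -(hprod_projP_projP F_neq0); exact: Im_hprod_eq0 uv0 uab.
apply/eqP => comb0.
have [] := free_projP_comb pqF_free (_ : projP F *m (u%:C *: p - v%:C *: q) = 0).
  by rewrite mulmxBr -!scalemxAr.
by move=> [u0] [v0]; rewrite u0 v0 eqxx in uv0.
Qed.

Unset Implicit Arguments.

Theorem mainTheorem1 (R : realType) (N : nat) (Omega : set (R * R))
  (f : R * R -> 'cV[R[i]]_N) (X : R * R -> 'M[R[i]]_N) :
  open Omega -> connected Omega -> simply_connected Omega ->
  smooth_cvec_on Omega f ->
  (forall x, Omega x -> f x != 0) ->
  CPN_EL Omega f ->
  (forall x, Omega x -> in_su (X x)) ->
  (forall x, Omega x ->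
     mx_is_derive x eL X (comm (dL (fun y => projP (f y)) x) (projP (f x)))) ->
  (forall x, Omega x ->
     mx_is_derive x eR X (- comm (dR (fun y => projP (f y)) x) (projP (f x)))) ->
  forall x, Omega x ->
    let G_LL := su_dot (dL X x) (dL X x) in
    let G_LR := su_dot (dL X x) (dR X x) in
    let G_RL := su_dot (dR X x) (dL X x) in
    let G_RR := su_dot (dR X x) (dR X x) in
    let nf := hprod (f x) (f x) in
    let J_L := hprod (dL f x) (projP (f x) *m dL f x) / nf in
    let J_R := hprod (dR f x) (projP (f x) *m dR f x) / nf in
    [/\ G_LL = J_L, G_RR = J_R,
        G_LR = - (complex.Re (hprod (dR f x) (projP (f x) *m dL f x) / nf))%:C
          /\ G_RL = G_LR,
        psd_form G_LL G_LR G_RR /\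
          [/\ 0 <= J_L, 0 <= J_R & 0 <= G_LL * G_RR - G_LR * G_RL] &
        ((complex.Im (hprod (dL f x) (projP (f x) *m dR f x)) != 0 \/
          free [:: dL f x; dR f x; f x]) ->
           pd_form G_LL G_LR G_RR)].
Proof.
move=> _ _ _ f_smooth f_neq0 _ _ dXL dXR x Ox.
have fx_neq0 := f_neq0 x Ox.
have f_der v : mx_is_derive x v f (dmx v f x) := smooth_cvec_is_derive v f_smooth Ox.
have XLE : dL X x = (hprod (f x) (f x))^-1 *: skew_outer (projP (f x) *m dL f x) (f x).
  rewrite [LHS](mx_is_derive_dmx (dXL x Ox)) [dL _ x](dmx_projP (f_der eL) fx_neq0).
  by rewrite (comm_dprojP fx_neq0) ?projP_idemv.
have XRE : dR X x = (hprod (f x) (f x))^-1 *: skew_outer (f x) (projP (f x) *m dR f x).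
  rewrite [LHS](mx_is_derive_dmx (dXR x Ox)) [dR _ x](dmx_projP (f_der eR) fx_neq0).
  by rewrite skew_outerC scalerN (comm_dprojP fx_neq0) ?projP_idemv.
rewrite XLE XRE; exact: first_fundamental_form.
Qed.
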